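(* Let $t\ge 3$ and let $L$ be an $\mathbb{F}_q$-linear set of pseudoregulus type of $\Lambda=PG(1,q^t)$. Then its transversal points are uniquely determined: if $L=L_{\rho,\tau}$ with respect to transversal points $P_1,P_2$ and also $L=L_{\rho',\tau'}$ with respect to transversal points $P_1',P_2'$, then $\{P_1',P_2'\}=\{P_1,P_2\}$.
   Context: Let $\Lambda=PG(V,\mathbb{F}_{q^t})=PG(1,q^t)$ with $V$ a 2-dimensional $\mathbb{F}_{q^t}$-space; $\langle\mathbf u\rangle_{q^t}$ denotes the point defined by $\mathbf u\neq\mathbf 0$. Definition: given two distinct points $P_1=\langle\mathbf w\rangle_{q^t}$, $P_2=\langle\mathbf v\rangle_{q^t}$ of $\Lambda$, an automorphism $\tau$ of $\mathbb{F}_{q^t}$ with $\mathrm{Fix}(\tau)=\mathbb{F}_q$, and $\rho\in\mathbb{F}_{q^t}^*$, the set $L_{\rho,\tau}=\{\langle\lambda\mathbf w+\rho\lambda^\tau\mathbf v\rangle_{q^t}:\lambda\in\mathbb{F}_{q^t}^*\}$ is called an $\mathbb{F}_q$-linear set of pseudoregulus type of $\Lambda$, with transversal points $P_1$ and $P_2$. *)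

From HB Require Import structures.
From mathcomp Require Import all_boot all_order all_algebra all_field.
Set Implicit Arguments. Unset Strict Implicit. Unset Printing Implicit Defensive.
Import GRing.Theory.
Local Open Scope ring_scope.

(* The underlying 2-dimensional F_{q^t}-space V is 'rV[K]_2, with K the finite
   field F_{q^t}.  A point <u>_{q^t} of PG(1,q^t) is represented by a nonzero
   vector u; two nonzero vectors define the same point iff proportional. *)
Definition same_point (K : fieldType) (u u' : 'rV[K]_2) : Prop :=
  exists c : K, c != 0 /\ u' = c *: u.

Definition in_pseudoregulus (K : fieldType) (w v : 'rV[K]_2) (rho : K)
  (tau : K -> K) (u : 'rV[K]_2) : Prop :=
  exists lambda : K, lambda != 0 /\
    same_point (lambda *: w + (rho * tau lambda) *: v) u.

(* Fix(tau) = F_q : tau is a field automorphism whose fixed field has q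
   elements (the unique subfield of order q of the finite field K). *)
Definition fix_is_Fq (K : finFieldType) (q : nat) (tau : {rmorphism K -> K}) : Prop :=
  bijective tau /\ #|[set x : K | tau x == x]| = q.

(* Data for L_{rho,tau} with transversal points <w>, <v>: w, v nonzero and
   defining distinct points; rho nonzero; tau as above. *)
Definition pseudoregulus_data (K : finFieldType) (q : nat) (w v : 'rV[K]_2)
  (rho : K) (tau : {rmorphism K -> K}) : Prop :=
  [/\ w != 0, v != 0, ~ same_point w v, rho != 0 & fix_is_Fq q tau].

From HB Require Import structures.
From mathcomp Require Import all_boot all_order all_algebra all_field.
From mathcomp Require Import fingroup pgroup abelian.
From mathcomp Require Import ring zify.
Import GRing.Theory.
Local Open Scope ring_scope.

(* Write N(tau) = { tau(l)/l : l <> 0 }.  It is a subgroup of K^* of order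
   n = (q^t - 1)/(q - 1) = 1 + q m, where q = #|Fix tau| is a power of the
   characteristic, m = 1 + q + ... + q^(t-2) >= 2 (as t >= 3) and m = 1 in K.
   Every point <u> of L_{rho,tau} satisfies det(w,u)^n = (rho det(u,v))^n.
   Applied to the points <w' + rho' z v'>, z in N(tau'), of L_{rho',tau'},
   this gives (a + b z)^n = (c + d z)^n for the n roots of unity z in N(tau'),
   where ad - bc = -rho rho' det(w,v) det(w',v') <> 0.  A polynomial argument
   (vanishing at n + 1 points, differentiation, and the descent y = x^q along
   the Frobenius map) turns this into two monomial equations in a, b, c, d,
   forcing b = c = 0 or a = d = 0, which says {<w'>, <v'>} = {<w>, <v>}. *)

Set Implicit Arguments. Unset Strict Implicit.

(* The order of the fixed field of a ring endomorphism of a finite field is a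
   power of the characteristic: it is an additive subgroup of K, and the
   additive group of K is an elementary abelian p-group. *)
Lemma fixed_card_pchar_nat (K : finFieldType) (tau : {rmorphism K -> K}) :
  [pchar K].-nat #|[set x : K | tau x == x]|.
Proof.
have [p p_pr pK] := finPcharP K.
have fix_group : group_set [set x : K | tau x == x].
  apply/group_setP; split; first by rewrite inE FinRing.zmod1gE rmorph0.
  move=> x y; rewrite !inE !FinRing.zmodMgE => /eqP tx /eqP ty.
  by rewrite rmorphD tx ty.
have := pgroupS (subsetT (Group fix_group)) (abelem_pgroup (fin_ring_pchar_abelem pK)).
by rewrite /pgroup /= (eq_pnat _ (pcharf_eq pK)).
Qed.

Definition quot_set (K : finFieldType) (tau : K -> K) : {set K} :=
  [set x | [exists l, (l != 0) && (x == tau l / l)]].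

Section QuotientSet.
Variables (K : finFieldType) (tau : {rmorphism K -> K}).
Local Notation N := (quot_set tau).

Lemma quot_setP x : reflect (exists2 l, l != 0 & x = tau l / l) (x \in N).
Proof.
rewrite inE; apply: (iffP existsP) => [[l /andP[l0 /eqP ->]]|[l l0 ->]].
  by exists l.
by exists l; rewrite l0 eqxx.
Qed.

Lemma quot_set_neq0 x : x \in N -> x != 0.
Proof. by case/quot_setP=> l l0 ->; rewrite mulf_neq0 ?invr_eq0 ?fmorph_eq0. Qed.

Lemma quot_setM x y : x \in N -> y \in N -> x * y \in N.
Proof.
case/quot_setP=> l l0 ->; case/quot_setP=> m m0 ->; apply/quot_setP.
by exists (l * m); rewrite ?mulf_neq0 // rmorphM invfM mulrACA.
Qed.

(* N is a finite multiplicative group, so its elements are #|N|-th roots of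
   unity: multiplication by x permutes N, compare the products. *)
Lemma quot_set_root x : x \in N -> x ^+ #|N| = 1.
Proof.
move=> xN.
have mulx_inj : {in N &, injective ( *%R x)}.
  by move=> y z _ _; apply/mulfI/quot_set_neq0.
have mulxN : ( *%R x) @: N = N.
  apply/eqP; rewrite eqEcard card_in_imset // leqnn andbT.
  by apply/subsetP=> _ /imsetP[y yN ->]; apply: quot_setM.
have prodN0 : \prod_(y in N) y != 0 by apply/prodf_neq0 => y /quot_set_neq0.
have : \prod_(y in ( *%R x) @: N) y = \prod_(y in N) (x * y).
  exact: big_imset.
rewrite mulxN big_split /= prodr_const => /eqP.
by rewrite -{1}[\prod_(y in N) y]mul1r (inj_eq (mulIf prodN0)) eq_sym => /eqP.
Qed.

(* Each fibre of l |-> tau(l)/l over K^* is a coset l0 F^* of the nonzero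
   fixed elements, so #|N| * (#|F| - 1) = #|K| - 1. *)
Lemma quot_set_card (q : nat) : #|[set x : K | tau x == x]| = q ->
  (#|N| * q.-1 = #|K|.-1)%N.
Proof.
set F := [set x : K | tau x == x] => cardF.
have cardF0 : #|F :\ 0| = q.-1.
  by rewrite -cardF (cardsD1 0 F) inE rmorph0 eqxx.
have -> : #|K|.-1 = (\sum_(l : K | l != 0%R) 1)%N by rewrite sum1_card cardC1.
rewrite (partition_big (fun l => tau l / l) (mem N)); last first.
  by move=> l l0; apply/quot_setP; exists l.
rewrite -sum_nat_const; apply: eq_bigr => _ /quot_setP[l0 l00 ->].
have fibre : [pred l | (l != 0) && (tau l / l == tau l0 / l0)] =i
             ( *%R l0) @: (F :\ 0).
  have tl00 : tau l0 != 0 by rewrite fmorph_eq0.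
  move=> l; rewrite !inE; apply/andP/imsetP => [[l_0 /eqP e]|[x]].
    exists (l / l0); last by rewrite mulrC divfK.
    rewrite !inE mulf_neq0 ?invr_eq0 //= fmorph_div.
    apply/eqP/(mulIf tl00); rewrite divfK //.
    apply: (mulIf (_ : l^-1 != 0)); rewrite ?invr_eq0 // e; field.
    by rewrite l_0 l00.
  rewrite !inE => /andP[x0 /eqP tx] ->; split; first by rewrite mulf_neq0.
  by rewrite rmorphM tx invfM; apply/eqP; field; rewrite x0 l00.
by rewrite sum1_card (eq_card fibre) card_imset ?cardF0 //; apply: mulfI.
Qed.

End QuotientSet.

Lemma fixed_field_order (K : finFieldType) (q : nat) (tau : {rmorphism K -> K}) :
  fix_is_Fq q tau -> [pchar K].-nat q /\ (1 < q)%N.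
Proof.
case=> _ <-; split; first exact: fixed_card_pchar_nat.
apply: leq_trans (subset_leq_card (_ : [set 0; 1] \subset _)).
  by rewrite cards2 eq_sym oner_neq0.
by apply/subsetP => x; rewrite !inE => /orP[]/eqP->; rewrite ?rmorph0 ?rmorph1.
Qed.

Lemma quot_set_card_geom (K : finFieldType) (q t : nat) (tau : {rmorphism K -> K}) :
  #|K| = (q ^ t)%N -> fix_is_Fq q tau -> #|quot_set tau| = (\sum_(i < t) q ^ i)%N.
Proof.
move=> cardK tauF; have [_ q1] := fixed_field_order tauF.
have := quot_set_card tauF.2; rewrite cardK predn_exp mulnC => /eqP.
by rewrite eqn_pmul2l => [/eqP|]; last lia.
Qed.

Lemma geometric_sum_split (q t : nat) :
  (\sum_(i < t.+3) q ^ i = 1 + q * (1 + q * (1 + q * \sum_(i < t) q ^ i)))%N.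
Proof.
have peel k : (\sum_(i < k.+1) q ^ i = 1 + q * \sum_(i < k) q ^ i)%N.
  by rewrite big_ord_recl big_distrr; congr (_ + _)%N; apply: eq_bigr => i _; rewrite expnS.
by rewrite !peel.
Qed.

Section PcharPower.
Variables (K : finFieldType) (q : nat).
Hypothesis pq : [pchar K].-nat q.

Lemma pchar_power_inj : injective (fun x : K => x ^+ q).
Proof.
move=> x y /= e; apply/eqP; rewrite -subr_eq0.
have := exprDn_pchar (x - y) y pq; rewrite subrK e => /eqP.
by rewrite -[X in X == _]add0r (inj_eq (addIr _)) eq_sym expf_eq0 => /andP[].
Qed.

Lemma pchar_power_surj (y : K) : exists x, y = x ^+ q.
Proof. by have /codomP[x ->] := injF_onto pchar_power_inj y; exists x. Qed.

Lemma pchar_power_eq1 (x : K) : x ^+ q = 1 -> x = 1.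
Proof. by move=> e; apply: pchar_power_inj; rewrite /= e expr1n. Qed.

Lemma pchar_power_natr0 : (1 < q)%N -> q%:R = 0 :> K.
Proof.
move=> q_gt1; have p_char : pdiv q \in [pchar K].
  by apply: (pnatPpi pq); rewrite pi_pdiv.
by rewrite -(divnK (pdiv_dvd q)) natrM (pcharf0 p_char) mulr0.
Qed.

End PcharPower.

Definition lin (K : fieldType) (a b : K) : {poly K} := a%:P + b *: 'X.

Section AffinePowers.
Variable K : fieldType.
Implicit Types (a b c d x : K) (p r : {poly K}).

Lemma horner_lin a b x : (lin a b).[x] = a + b * x.
Proof. by rewrite /lin !hornerE. Qed.

Lemma size_lin_exp a b k : (size (lin a b ^+ k) <= k.+1)%N.
Proof.
have size_lin : (size (lin a b) <= 2)%N.
  apply: leq_trans (size_polyD _ _) _; rewrite geq_max.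
  rewrite (leq_trans (size_polyC_leq1 _)) //=.
  by apply: leq_trans (size_scale_leq _ _) _; rewrite size_polyX.
apply: leq_trans (size_poly_exp_leq _ _) _; rewrite ltnS.
by apply: leq_trans (leq_mul (_ : (size (lin a b)).-1 <= 1)%N (leqnn k)) _; lia.
Qed.

Lemma size_sub_leq p r N :
  (size p <= N)%N -> (size r <= N)%N -> (size (p - r)%R <= N)%N.
Proof.
move=> sp sr; apply: leq_trans (size_polyD _ _) _.
by rewrite geq_max sp size_polyN.
Qed.

Lemma size_scale_leqW a p N : (size p <= N)%N -> (size (a *: p) <= N)%N.
Proof. exact/leq_trans/size_scale_leq. Qed.

Lemma deriv_lin_exp a b k : (lin a b ^+ k)^`() = (b *: lin a b ^+ k.-1) *+ k.
Proof. by rewrite deriv_exp /lin derivD derivC derivZ derivX add0r alg_polyC mul_polyC. Qed.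

(* If (a + b z)^n = (c + d z)^n at n distinct nonzero n-th roots of unity z,
   then (a + bX)^n - (c + dX)^n - (a^n - c^n)(1 - X^n), of degree <= n,
   vanishes at these n points and at 0, hence is the zero polynomial. *)
Lemma lin_power_identity n a b c d (s : seq K) :
  uniq s -> 0 \notin s -> size s = n ->
  {in s, forall z, z ^+ n = 1} ->
  {in s, forall z, (a + b * z) ^+ n = (c + d * z) ^+ n} ->
  lin a b ^+ n - lin c d ^+ n = (a ^+ n - c ^+ n) *: (1 - 'X^n).
Proof.
move=> s_uniq s0 s_size s_root s_eq; apply/eqP; rewrite -subr_eq0; apply/eqP.
apply: (@roots_geq_poly_eq0 _ _ (0 :: s)).
- rewrite /= !rootE !(hornerE, horner_lin); apply/andP; split.
    case: n {s_size s_root s_eq} => [|n]; rewrite ?expr0 ?subrr ?mulr0 ?subrr //.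
    by rewrite expr0n subr0 mulr1 subrr.
  apply/allP => z zs; rewrite rootE !(hornerE, horner_lin).
  by rewrite (s_eq z zs) (s_root z zs) !subrr mulr0 subrr.
- by rewrite /= s0.
- rewrite /= s_size; apply: size_sub_leq.
    exact: size_sub_leq (size_lin_exp _ _ _) (size_lin_exp _ _ _).
  apply: size_scale_leqW; apply: size_sub_leq; first by rewrite size_polyC; case: (_ != _).
  by rewrite size_polyXn.
Qed.

Lemma lin_power_identity_deriv n a b c d k x :
  n%:R != 0 :> K ->
  lin a b ^+ n - lin c d ^+ n = k *: (1 - 'X^n) ->
  b * (a + b * x) ^+ n.-1 - d * (c + d * x) ^+ n.-1 = - k * x ^+ n.-1.
Proof.
move=> nR0 /(congr1 (fun p => (p^`()).[x])).
rewrite !derivB !deriv_lin_exp derivZ derivB derivC derivXn sub0r.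
rewrite !(hornerMn, hornerE, horner_lin) => e.
by apply: (mulIf nR0); rewrite !mulr_natr mulrnBl e; ring.
Qed.

Lemma lin_power_coefs m a b a' c d d' k :
  (2 <= m)%N ->
  b *: lin a a' ^+ m - d *: lin c d' ^+ m = k *: 'X^m ->
  b * a ^+ m = d * c ^+ m /\
  m%:R * (b * a' * a ^+ m.-1) = m%:R * (d * d' * c ^+ m.-1).
Proof.
move=> m2 e; have m_neq0 : (m == 0)%N = false by lia.
have m1_neq0 : (m.-1 == 0)%N = false by lia.
split.
  have := congr1 (horner^~ 0) e; rewrite !(hornerE, horner_lin) expr0n m_neq0.
  by rewrite mulr0 => /eqP; rewrite subr_eq0 => /eqP.
have de := congr1 (fun p => (p^`()).[0]) e.
rewrite !derivB !derivZ !deriv_lin_exp derivXn !(hornerMn, hornerE, horner_lin) in de.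
move: de; rewrite expr0n m1_neq0 mul0rn mulr0 => /eqP; rewrite subr_eq0 !mulrnAr => /eqP.
by rewrite !mulr_natl -!mulrA.
Qed.

End AffinePowers.

(* Writing y = x^q, an identity b (a+bx)^(qm) - d (c+dx)^(qm) = k x^(qm) on a
   finite field of characteristic p | q becomes a polynomial identity of
   degree <= m in y; it holds on all of K, hence identically if m < #|K|. *)
Lemma pchar_power_descent (K : finFieldType) (q m : nat) (a b c d k : K) :
  [pchar K].-nat q -> (m < #|K|)%N ->
  (forall x, b * (a + b * x) ^+ (q * m) - d * (c + d * x) ^+ (q * m) = k * x ^+ (q * m)) ->
  b *: lin (a ^+ q) (b ^+ q) ^+ m - d *: lin (c ^+ q) (d ^+ q) ^+ m = k *: 'X^m.
Proof.
move=> pq mK e; apply/eqP; rewrite -subr_eq0; apply/eqP.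
apply: (@roots_geq_poly_eq0 _ _ (enum K)); last 2 first.
- exact: enum_uniq.
- rewrite -cardE; apply: leq_trans mK; apply: size_sub_leq; last first.
    by apply: size_scale_leqW; rewrite size_polyXn.
  by apply: size_sub_leq; apply/size_scale_leqW/size_lin_exp.
apply/allP => y _; have [x ->] := pchar_power_surj pq y.
rewrite rootE !(hornerE, horner_lin) -!exprMn -!(exprDn_pchar _ _ pq) -!exprM e.
by rewrite subrr.
Qed.

(* The final algebraic step.  If a, c <> 0, put u = a/c; the two equations
   force (u^(1+qm))^q = 1, hence u^(1+qm) = 1 and then ad - bc = 0. *)
Lemma affine_power_dichotomy (K : fieldType) (q m : nat) (a b c d : K) :
  (0 < q)%N -> (0 < m)%N -> (forall x : K, x ^+ q = 1 -> x = 1) ->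
  b * a ^+ (q * m) = d * c ^+ (q * m) ->
  b ^+ q.+1 * a ^+ (q * m.-1) = d ^+ q.+1 * c ^+ (q * m.-1) ->
  a * d - b * c != 0 ->
  (b = 0 /\ c = 0) \/ (a = 0 /\ d = 0).
Proof.
move=> q0 m0 root1 E1 E2 det.
have qm0 : (q * m == 0)%N = false by lia.
have [a0|a0] := eqVneq a 0.
  right; split=> //; move: E1 det; rewrite a0 expr0n qm0 mulr0 mul0r sub0r oppr_eq0.
  move/esym/eqP; rewrite mulf_eq0 expf_eq0 lt0n qm0 /= => /orP[/eqP //|/eqP->].
  by rewrite mulr0 eqxx.
have [c0|c0] := eqVneq c 0.
  left; split=> //; move: E1; rewrite c0 expr0n qm0 mulr0 => /eqP.
  by rewrite mulf_eq0 expf_eq0 lt0n qm0 (negbTE a0) orbF => /eqP.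
exfalso; have [u ea] : exists u, a = u * c by exists (a / c); rewrite divfK.
have u0 : u != 0 by move: a0; rewrite ea mulf_eq0 negb_or => /andP[].
have ed : d = b * u ^+ (q * m).
  apply: (mulIf (expf_neq0 (q * m) c0)).
  by rewrite -E1 {1}ea exprMn mulrA.
have [b0|b0] := eqVneq b 0.
  by move: det; rewrite ed b0 !mul0r mulr0 subrr eqxx.
have E3 : u ^+ (q * m.-1) = (u ^+ (q * m)) ^+ q.+1.
  apply: (mulIf (_ : b ^+ q.+1 * c ^+ (q * m.-1) != 0)); first by rewrite mulf_neq0 ?expf_neq0.
  move: E2; rewrite ea ed !exprMn => E2.
  transitivity (b ^+ q.+1 * (u ^+ (q * m.-1) * c ^+ (q * m.-1))); first by ring.
  by rewrite E2; ring.
have E4 : (u ^+ (1 + q * m)) ^+ q = 1.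
  apply: (mulIf (expf_neq0 (q * m.-1) u0)).
  rewrite mul1r [in RHS]E3 -!exprM -exprD; congr (_ ^+ _).
  by case: m m0 {E1 E2 E3 ed qm0} => // m' _ /=; nia.
move: det; rewrite ea ed.
have -> : u * c * (b * u ^+ (q * m)) - b * c = b * c * (u ^+ (1 + q * m) - 1).
  by rewrite exprD expr1; ring.
by rewrite (root1 _ E4) subrr mulr0 eqxx.
Qed.

Lemma affine_power_equality (K : finFieldType) (q m : nat) (a b c d : K) (S : {set K}) :
  [pchar K].-nat q -> (1 < q)%N -> (2 <= m)%N -> m%:R = 1 :> K ->
  #|S| = (1 + q * m)%N -> 0 \notin S ->
  {in S, forall z, z ^+ (1 + q * m) = 1} ->
  {in S, forall z, (a + b * z) ^+ (1 + q * m) = (c + d * z) ^+ (1 + q * m)} ->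
  a * d - b * c != 0 ->
  (b = 0 /\ c = 0) \/ (a = 0 /\ d = 0).
Proof.
move=> pq q1 m2 mR cardS S0 S_root S_eq det.
have nR : (1 + q * m)%:R != 0 :> K.
  by rewrite natrD natrM (pchar_power_natr0 pq q1) mul0r addr0 oner_neq0.
have in_enum (P : K -> Prop) : {in S, forall z, P z} -> {in enum S, forall z, P z}.
  by move=> PS z; rewrite mem_enum; apply: PS.
have S0' : 0 \notin enum S by rewrite mem_enum.
have sizeS : size (enum S) = (1 + q * m)%N by rewrite -cardE.
have powers := lin_power_identity (enum_uniq (mem S)) S0' sizeS
  (in_enum _ S_root) (in_enum _ S_eq).
have derived x := lin_power_identity_deriv x nR powers.
have mK : (m < #|K|)%N.
  apply: leq_trans (max_card (mem S)); rewrite cardS add1n ltnS leq_pmull //; lia.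
have [E1 E2] := lin_power_coefs m2 (pchar_power_descent pq mK derived).
rewrite mR !mul1r -!exprS -!exprM in E2; rewrite -!exprM in E1.
by apply: affine_power_dichotomy (pchar_power_eq1 pq) E1 E2 det; lia.
Qed.

Definition det2 (K : fieldType) (u v : 'rV[K]_2) : K :=
  u 0 0 * v 0 1 - u 0 1 * v 0 0.

Section Determinant.
Variable K : fieldType.
Implicit Types u v x y : 'rV[K]_2.

Lemma det2_swap u v : det2 v u = - det2 u v.
Proof. by rewrite /det2; ring. Qed.

Lemma row_neq0_coord n (u : 'rV[K]_n) : u != 0 -> exists i, u 0 i != 0.
Proof.
move=> u0; case: (pickP (fun i => u 0 i != 0)) => [i ui|u_eq0]; first by exists i.
suff u_0 : u = 0 by rewrite u_0 eqxx in u0.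
by apply/rowP => i; have /negbFE/eqP -> := u_eq0 i; rewrite mxE.
Qed.

Lemma det2_plucker u v x y :
  det2 u x * det2 y v - det2 u y * det2 x v = - (det2 u v * det2 x y).
Proof. by rewrite /det2; ring. Qed.

Lemma det2_cross u v i : det2 u v = 0 -> v 0 i *: u = u 0 i *: v.
Proof.
move/eqP; rewrite subr_eq0 => /eqP e; apply/rowP => j; rewrite !mxE.
have ord2 (k : 'I_2) : k = 0 \/ k = 1.
  by case: k => [[|[|]]] // ?; [left|right]; exact: val_inj.
by case: (ord2 i) (ord2 j) => -> [] ->; rewrite // mulrC // -e.
Qed.

Lemma same_pointP u v : u != 0 -> v != 0 -> same_point u v <-> det2 u v = 0.
Proof.
move=> u0 v0; split=> [[c [_ ->]]|/det2_cross cross]; first by rewrite /det2 !mxE; ring.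
have [i ui0] := row_neq0_coord u0.
have vi0 : v 0 i != 0.
  apply: contraNneq v0 => vi0; have := cross i; rewrite vi0 scale0r => /esym/eqP.
  by rewrite scaler_eq0 (negbTE ui0).
exists (v 0 i / u 0 i); split; first by rewrite mulf_neq0 ?invr_eq0.
by rewrite mulrC -scalerA (cross i) scalerA mulVf ?scale1r.
Qed.

End Determinant.

Section PseudoregulusPoints.
Variables (K : finFieldType) (w v : 'rV[K]_2) (rho : K) (tau : {rmorphism K -> K}).

(* For u = k (lambda w + rho lambda^tau v) one has
   det(w,u) = (lambda^tau / lambda) rho det(u,v), and lambda^tau/lambda is a
   #|N(tau)|-th root of unity. *)
Lemma pseudoregulus_det_power u :
  in_pseudoregulus w v rho tau u ->
  det2 w u ^+ #|quot_set tau| = (rho * det2 u v) ^+ #|quot_set tau|.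
Proof.
case=> lam [lam0 [k [_ ->]]]; set p := k *: _.
have -> : det2 w p = tau lam / lam * (rho * det2 p v) by rewrite /det2 !mxE; field.
by rewrite exprMn quot_set_root ?mul1r //; apply/quot_setP; exists lam.
Qed.

Lemma pseudoregulus_point z :
  z \in quot_set tau -> in_pseudoregulus w v rho tau (w + (rho * z) *: v).
Proof.
case/quot_setP=> mu mu0 ->; exists mu; split=> //; exists mu^-1.
by split; [rewrite invr_eq0 | apply/rowP => j; rewrite !mxE; field].
Qed.

Lemma pseudoregulus_point_neq0 s : det2 w v != 0 -> w + s *: v != 0.
Proof.
apply: contraNneq => ws0; have <- : det2 (w + s *: v) v = det2 w v.
  by rewrite /det2 !mxE; ring.
by rewrite ws0 /det2 !mxE !mul0r subrr.
Qed.

End PseudoregulusPoints.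

Lemma pseudoregulus_transfer (K : finFieldType) (w v w' v' : 'rV[K]_2) (rho rho' : K)
    (tau tau' : {rmorphism K -> K}) z :
  det2 w' v' != 0 ->
  (forall u, u != 0 -> in_pseudoregulus w' v' rho' tau' u -> in_pseudoregulus w v rho tau u) ->
  z \in quot_set tau' ->
  (det2 w w' + det2 w v' * rho' * z) ^+ #|quot_set tau| =
  (rho * det2 w' v + rho * det2 v' v * rho' * z) ^+ #|quot_set tau|.
Proof.
move=> Dwv' L'L zN; set u := w' + (rho' * z) *: v'.
have uL := L'L u (pseudoregulus_point_neq0 _ Dwv') (pseudoregulus_point w' v' rho' zN).
have -> : det2 w w' + det2 w v' * rho' * z = det2 w u by rewrite /det2 !mxE; ring.
have -> : rho * det2 w' v + rho * det2 v' v * rho' * z = rho * det2 u v.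
  by rewrite /det2 !mxE; ring.
exact: pseudoregulus_det_power.
Qed.

Unset Implicit Arguments. Set Strict Implicit.

Theorem proposition4p3 (K : finFieldType) (q t : nat)
  (hq : #|K| = (q ^ t)%N) (ht : (3 <= t)%N)
  (w v : 'rV[K]_2) (rho : K) (tau : {rmorphism K -> K})
  (w' v' : 'rV[K]_2) (rho' : K) (tau' : {rmorphism K -> K})
  (hL : pseudoregulus_data q w v rho tau)
  (hL' : pseudoregulus_data q w' v' rho' tau')
  (heq : forall u : 'rV[K]_2, u != 0 ->
           (in_pseudoregulus w v rho tau u <-> in_pseudoregulus w' v' rho' tau' u)) :
  (same_point w w' /\ same_point v v') \/ (same_point w v' /\ same_point v w').
Proof.
case: hL hL' => w0 v0 wv rho0 tauF [w'0 v'0 wv' rho'0 tau'F].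
have Dwv : det2 w v != 0 by apply/eqP => /(same_pointP w0 v0).
have Dwv' : det2 w' v' != 0 by apply/eqP => /(same_pointP w'0 v'0).
have [pq q1] := fixed_field_order tauF.
case: t hq ht => [|[|[|t]]] // hq _.
set m := (1 + q * (1 + q * \sum_(i < t) q ^ i))%N.
have [cardN cardN'] : #|quot_set tau| = (1 + q * m)%N /\ #|quot_set tau'| = (1 + q * m)%N.
  by rewrite !(quot_set_card_geom hq) // geometric_sum_split.
have mR : m%:R = 1 :> K by rewrite natrD natrM (pchar_power_natr0 pq q1) mul0r addr0.
have N'0 : 0 \notin quot_set tau' by apply/negP => /quot_set_neq0; rewrite eqxx.
have N'root : {in quot_set tau', forall z, z ^+ (1 + q * m) = 1}.
  by rewrite -cardN'; exact: quot_set_root.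
have shared : {in quot_set tau', forall z,
    (det2 w w' + det2 w v' * rho' * z) ^+ (1 + q * m) =
    (rho * det2 w' v + rho * det2 v' v * rho' * z) ^+ (1 + q * m)}.
  by rewrite -cardN => z; apply: pseudoregulus_transfer => // u u0 /(heq u u0).
have det : det2 w w' * (rho * det2 v' v * rho') - det2 w v' * rho' * (rho * det2 w' v) != 0.
  rewrite (_ : _ - _ = rho * rho' * (det2 w w' * det2 v' v - det2 w v' * det2 w' v)).
    by rewrite det2_plucker mulrN oppr_eq0 !mulf_neq0.
  by ring.
have m2 : (2 <= m)%N by nia.
case: (affine_power_equality pq q1 m2 mR cardN' N'0 N'root shared det)
  => [[/eqP b0 /eqP c0]|[a0 /eqP d0]]; [right|left]; split; apply/same_pointP => //.
- by move: b0; rewrite mulf_eq0 (negbTE rho'0) orbF => /eqP.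
- by rewrite det2_swap; move: c0; rewrite mulf_eq0 (negbTE rho0) => /eqP ->; rewrite oppr0.
- rewrite det2_swap; move: d0; rewrite !mulf_eq0 (negbTE rho0) (negbTE rho'0) orbF /=.
  by move=> /eqP ->; rewrite oppr0.
Qed.
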